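(* In the standing setup, assume $A$ is generic and $\det f_0'(x)$ is not identically zero, and let $P_0,Q_1,Q_2,Q_3$ be as defined in the context (for $\varepsilon\ne0$, on the set where $s_1s_2s_3\ne0$). Then for $i=1,2,3$: $\nabla P_0(x,\varepsilon)=\varepsilon^2B_i\nabla Q_i(x,\varepsilon)$, gradients taken with respect to $x$.
   Context: Standing setup: $J=\begin{pmatrix}0&I_3\\-I_3&0\end{pmatrix}$ ($6\times6$). $A$ is a fixed real $6\times 6$ skew-Hamiltonian matrix ($A^{\rm T}J=JA$). $H_0$ is a homogeneous cubic polynomial on $\mathbb R^6$ with $A\nabla^2H_0(x)=\nabla^2H_0(x)A^{\rm T}$ for all $x$ ($\nabla^2$ = Hesse matrix), $f_0=J\nabla H_0$, with Jacobi matrix $f_0'$. Genericity: the characteristic polynomial of $A$ (a square of a cubic) has three pairwise distinct roots $\lambda_1,\lambda_2,\lambda_3$, each a double eigenvalue. $B_i=\alpha_iI+\beta_iA+\gamma_iA^2$ ($i=1,2,3$), where $\alpha_i+\beta_i\lambda+\gamma_i\lambda^2$ is the unique polynomial of degree $\le2$ equal to $-1$ at $\lambda_i$ and to $1$ at the other two eigenvalues. $q_i(x)=\tfrac18\operatorname{tr}(B_i^{\rm T}(f_0'(x))^2)$. $s_0=1$, $s_1=1-2\varepsilon^2(q_2+q_3)$, $s_2=1-2\varepsilon^2(q_1+q_3)$, $s_3=1-2\varepsilon^2(q_1+q_2)$; $P_0=\tfrac14\big(\tfrac1{s_0}+\tfrac1{s_1}+\tfrac1{s_2}+\tfrac1{s_3}\big)$,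 $Q_1=\tfrac1{4\varepsilon^2}\big(-\tfrac1{s_0}-\tfrac1{s_1}+\tfrac1{s_2}+\tfrac1{s_3}\big)$, $Q_2=\tfrac1{4\varepsilon^2}\big(-\tfrac1{s_0}+\tfrac1{s_1}-\tfrac1{s_2}+\tfrac1{s_3}\big)$, $Q_3=\tfrac1{4\varepsilon^2}\big(-\tfrac1{s_0}+\tfrac1{s_1}+\tfrac1{s_2}-\tfrac1{s_3}\big)$. *)

From Stdlib Require Import Reals List Arith.
Import ListNotations.
Open Scope R_scope.

Definition sumR (n : nat) (f : nat -> R) : R :=
  fold_right Rplus 0 (map f (seq 0 n)).

(** Complex numbers as pairs (re, im); the eigenvalues of A may be complex. *)
Definition Cx : Type := (R * R)%type.
Definition RC (r : R) : Cx := (r, 0).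
Definition Cadd (z w : Cx) : Cx := (fst z + fst w, snd z + snd w).
Definition Copp (z : Cx) : Cx := (- fst z, - snd z).
Definition Csub (z w : Cx) : Cx := Cadd z (Copp w).
Definition Cmul (z w : Cx) : Cx :=
  (fst z * fst w - snd z * snd w, fst z * snd w + snd z * fst w).
Definition Cinv (z : Cx) : Cx :=
  (fst z / (fst z ^ 2 + snd z ^ 2), - snd z / (fst z ^ 2 + snd z ^ 2)).
Definition Cdiv (z w : Cx) : Cx := Cmul z (Cinv w).
Definition C0 : Cx := RC 0.
Definition C1 : Cx := RC 1.
Definition sumC (n : nat) (f : nat -> Cx) : Cx :=
  fold_right Cadd C0 (map f (seq 0 n)).

(** Matrices are functions nat -> nat -> K, only indices < 6 matter;
    vectors of R^6 are functions nat -> R. *)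
Definition mulR (M N : nat -> nat -> R) : nat -> nat -> R :=
  fun i j => sumR 6 (fun k => M i k * N k j).
Definition trR (M : nat -> nat -> R) : nat -> nat -> R := fun i j => M j i.
Definition mulC (M N : nat -> nat -> Cx) : nat -> nat -> Cx :=
  fun i j => sumC 6 (fun k => Cmul (M i k) (N k j)).
Definition embC (M : nat -> nat -> R) : nat -> nat -> Cx := fun i j => RC (M i j).
Definition idC : nat -> nat -> Cx := fun i j => if Nat.eqb i j then C1 else C0.
Definition traceC (M : nat -> nat -> Cx) : Cx := sumC 6 (fun k => M k k).
Definition trC (M : nat -> nat -> Cx) : nat -> nat -> Cx := fun i j => M j i.

Definition minor (j : nat) {K : Type} (M : nat -> nat -> K) : nat -> nat -> K :=
  fun i k => M (S i) (if Nat.ltb k j then k else S k).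
Fixpoint detR (n : nat) (M : nat -> nat -> R) : R :=
  match n with
  | O => 1
  | S m => sumR n (fun j => (-1) ^ j * M 0%nat j * detR m (minor j M))
  end.
Fixpoint detC (n : nat) (M : nat -> nat -> Cx) : Cx :=
  match n with
  | O => C1
  | S m => sumC n (fun j => Cmul (RC ((-1) ^ j)) (Cmul (M 0%nat j) (detC m (minor j M))))
  end.

Definition charpolyC (A : nat -> nat -> R) (z : Cx) : Cx :=
  detC 6 (fun i j => Csub (if Nat.eqb i j then z else C0) (RC (A i j))).

(** J = [[0, I3], [-I3, 0]]. *)
Definition Jmat : nat -> nat -> R := fun i j =>
  if (Nat.ltb i 3 && Nat.eqb j (i + 3))%bool then 1
  else if (Nat.ltb j 3 && Nat.eqb i (j + 3))%bool then -1 else 0.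

(** Homogeneous cubic H0(x) = sum_{a,b,c} T a b c x_a x_b x_c with T a
    symmetric 3-tensor (this parametrizes all homogeneous cubics on R^6). *)
Definition sym3 (T : nat -> nat -> nat -> R) : Prop :=
  forall a b c, (a < 6)%nat -> (b < 6)%nat -> (c < 6)%nat ->
    T a b c = T b a c /\ T a b c = T a c b.
Definition H0 (T : nat -> nat -> nat -> R) (x : nat -> R) : R :=
  sumR 6 (fun a => sumR 6 (fun b => sumR 6 (fun c => T a b c * x a * x b * x c))).
(** Hesse matrix of H0 at x (for symmetric T). *)
Definition hessH0 (T : nat -> nat -> nat -> R) (x : nat -> R) : nat -> nat -> R :=
  fun a b => 6 * sumR 6 (fun c => T a b c * x c).
(** Jacobi matrix of f0 = J grad H0, i.e. J * Hess H0. *)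
Definition df0 (T : nat -> nat -> nat -> R) (x : nat -> R) : nat -> nat -> R :=
  mulR Jmat (hessH0 T x).

Definition Bmat (A : nat -> nat -> R) (al be ga : Cx) : nat -> nat -> Cx :=
  fun i j => Cadd (Cadd (Cmul al (idC i j)) (Cmul be (RC (A i j))))
                  (Cmul ga (RC (mulR A A i j))).

Definition qfun (B : nat -> nat -> Cx) (T : nat -> nat -> nat -> R) (x : nat -> R) : Cx :=
  Cmul (RC (1/8)) (traceC (mulC (trC B) (embC (mulR (df0 T x) (df0 T x))))).

Definition sfun (qa qb : Cx) (eps : R) : Cx :=
  Csub C1 (Cmul (RC (2 * eps ^ 2)) (Cadd qa qb)).

Section PQ.
Variables (q1 q2 q3 : Cx) (eps : R).
Let s0 := C1.
Let s1 := sfun q2 q3 eps.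
Let s2 := sfun q1 q3 eps.
Let s3 := sfun q1 q2 eps.
Definition P0v : Cx :=
  Cmul (RC (1/4)) (Cadd (Cadd (Cinv s0) (Cinv s1)) (Cadd (Cinv s2) (Cinv s3))).
Definition Q1v : Cx :=
  Cmul (RC (1 / (4 * eps ^ 2)))
    (Cadd (Cadd (Copp (Cinv s0)) (Copp (Cinv s1))) (Cadd (Cinv s2) (Cinv s3))).
Definition Q2v : Cx :=
  Cmul (RC (1 / (4 * eps ^ 2)))
    (Cadd (Cadd (Copp (Cinv s0)) (Cinv s1)) (Cadd (Copp (Cinv s2)) (Cinv s3))).
Definition Q3v : Cx :=
  Cmul (RC (1 / (4 * eps ^ 2)))
    (Cadd (Cadd (Copp (Cinv s0)) (Cinv s1)) (Cadd (Cinv s2) (Copp (Cinv s3)))).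
Definition s123 : Cx := Cmul s1 (Cmul s2 s3).
End PQ.

Definition Qv (i : nat) (q1 q2 q3 : Cx) (eps : R) : Cx :=
  match i with
  | 1%nat => Q1v q1 q2 q3 eps
  | 2%nat => Q2v q1 q2 q3 eps
  | _ => Q3v q1 q2 q3 eps
  end.

Definition upd (x : nat -> R) (k : nat) (t : R) : nat -> R :=
  fun m => if Nat.eqb m k then t else x m.

Definition is_gradC (F : (nat -> R) -> Cx) (x : nat -> R) (g : nat -> Cx) : Prop :=
  forall k, (k < 6)%nat ->
    derivable_pt_lim (fun t => fst (F (upd x k t))) (x k) (fst (g k)) /\
    derivable_pt_lim (fun t => snd (F (upd x k t))) (x k) (snd (g k)).

From Pilot Require Import Defs.
From Stdlib Require Import Reals List Lra Lia FunctionalExtensionality.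
Open Scope R_scope.

(* Let V_n be the gradient of 1/8 tr ((A^n)^T f0'^2). Differentiating along a coordinate
   and using A Hess H0 = Hess H0 A^T at the basis vectors together with A^T J = J A gives
   A V_n = V_(n+1). As A is skew-Hamiltonian, its characteristic polynomial is p^2 for the
   cubic p with roots lambda_j, and p(A) = 0; hence w(A) V_0 depends only on the values
   w(lambda_j). Now grad q_j = b_j(A) V_0, where b_j is the interpolating polynomial of B_j,
   and grad P0, grad Q_i are combinations of the vectors (b_k + b_l)(A) V_0, {j, k, l} =
   {1, 2, 3}, whose polynomial is 2 at lambda_j and 0 at the other eigenvalues. The
   coefficients in grad Q_i differ from those in grad P0 by the factor 1/eps^2 and the
   signs b_i(lambda_j), and b_i(lambda_j)^2 = 1, so eps^2 B_i grad Q_i = grad P0. *)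

Lemma Cx_ring_theory : ring_theory C0 Defs.C1 Cadd Cmul Csub Copp (@eq Cx).
Proof.
  constructor; intros; repeat match goal with z : Cx |- _ => destruct z end;
    unfold Csub, Cadd, Cmul, Copp, C0, Defs.C1, RC; simpl; f_equal; ring.
Qed.
Add Ring Cx_ring : Cx_ring_theory.

Lemma Cmul_eq0 z w : Cmul z w = C0 -> z = C0 \/ w = C0.
Proof.
  destruct z as [a b], w as [c d]; unfold Cmul, C0, RC; simpl; intros [= H1 H2].
  destruct (Req_dec (a * a + b * b) 0) as [hz | hz].
  - left; f_equal; nra.
  - right.
    assert (hc : c * (a * a + b * b) = a * (a * c - b * d) + b * (a * d + b * c)) by ring.
    assert (hd : d * (a * a + b * b) = a * (a * d + b * c) - b * (a * c - b * d)) by ring.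
    rewrite H1, H2 in hc, hd.
    replace (a * 0 + b * 0) with 0 in hc by ring.
    replace (a * 0 - b * 0) with 0 in hd by ring.
    f_equal; [destruct (Rmult_integral _ _ hc) | destruct (Rmult_integral _ _ hd)]; tauto.
Qed.

Lemma Cmul_reg_l z w : z <> C0 -> Cmul z w = C0 -> w = C0.
Proof. intros hz h; destruct (Cmul_eq0 _ _ h); [contradiction | assumption]. Qed.

Lemma Csub_eq0 z w : Csub z w = C0 -> z = w.
Proof. intros h; transitivity (Cadd (Csub z w) w); [ring | rewrite h; ring]. Qed.

Lemma Csub_neq0 z w : z <> w -> Csub z w <> C0.
Proof. intros h e; apply h, Csub_eq0, e. Qed.

Lemma RC_add a b : RC (a + b) = Cadd (RC a) (RC b).
Proof. unfold RC, Cadd; simpl; f_equal; ring. Qed.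

Lemma RC_sub a b : RC (a - b) = Csub (RC a) (RC b).
Proof. unfold RC, Csub, Cadd, Copp; simpl; f_equal; ring. Qed.

Lemma RC_mul a b : RC (a * b) = Cmul (RC a) (RC b).
Proof. unfold RC, Cmul; simpl; f_equal; ring. Qed.

Lemma RC_opp1 : RC (-1) = Copp Defs.C1.
Proof. unfold RC, Copp, Defs.C1; simpl; f_equal; ring. Qed.

Lemma Cinv_C1 : Cinv Defs.C1 = Defs.C1.
Proof. unfold Cinv, Defs.C1, RC; simpl; f_equal; field. Qed.

Lemma sumC_ext n f g : (forall i, (i < n)%nat -> f i = g i) -> sumC n f = sumC n g.
Proof.
  intros H; unfold sumC; f_equal; apply map_ext_in; intros a Ha.
  apply in_seq in Ha; apply H; lia.
Qed.

Lemma sumC_RC n f : sumC n (fun i => RC (f i)) = RC (sumR n f).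
Proof.
  unfold sumC, sumR; induction (seq 0 n) as [|a l IH]; simpl; [reflexivity|].
  rewrite IH, RC_add; reflexivity.
Qed.

Lemma sumC_plus n f g : sumC n (fun i => Cadd (f i) (g i)) = Cadd (sumC n f) (sumC n g).
Proof. unfold sumC; induction (seq 0 n); simpl; [ring | rewrite IHl; ring]. Qed.

Lemma sumC_scal n c f : sumC n (fun i => Cmul c (f i)) = Cmul c (sumC n f).
Proof. unfold sumC; induction (seq 0 n); simpl; [ring | rewrite IHl; ring]. Qed.

Lemma sumC_scal_r n c f : sumC n (fun i => Cmul (f i) c) = Cmul (sumC n f) c.
Proof. unfold sumC; induction (seq 0 n); simpl; [ring | rewrite IHl; ring]. Qed.

Lemma sumC_zero n : sumC n (fun _ => C0) = C0.
Proof. unfold sumC; induction (seq 0 n); simpl; [ring | rewrite IHl; ring]. Qed.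

Lemma sumC_swap n m (f : nat -> nat -> Cx) :
  sumC n (fun i => sumC m (fun j => f i j)) = sumC m (fun j => sumC n (fun i => f i j)).
Proof.
  unfold sumC at 1 4; induction (seq 0 n) as [|a l IH]; simpl.
  - symmetry; apply sumC_zero.
  - rewrite IH; symmetry; apply sumC_plus.
Qed.

Lemma sumC_idC k v : (k < 6)%nat -> sumC 6 (fun l => Cmul (idC k l) (v l)) = v k.
Proof.
  intros hk; destruct k as [|[|[|[|[|[|k]]]]]]; try lia;
    cbv [sumC map seq fold_right idC Nat.eqb]; ring.
Qed.

Lemma sumC_mulR A k (v : nat -> Cx) :
  sumC 6 (fun l => Cmul (RC (mulR A A k l)) (v l)) =
  sumC 6 (fun m => Cmul (RC (A k m)) (sumC 6 (fun l => Cmul (RC (A m l)) (v l)))).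
Proof.
  transitivity (sumC 6 (fun l => sumC 6 (fun m => Cmul (RC (A k m)) (Cmul (RC (A m l)) (v l))))).
  - apply sumC_ext; intros l _; unfold mulR; rewrite <- sumC_RC, <- sumC_scal_r.
    apply sumC_ext; intros; rewrite RC_mul; ring.
  - rewrite sumC_swap; apply sumC_ext; intros; apply sumC_scal.
Qed.

Ltac unfold_sums6 := cbv [sumR mulR trR map seq fold_right].

Lemma sumR_ext n f g : (forall i, (i < n)%nat -> f i = g i) -> sumR n f = sumR n g.
Proof.
  intros H; unfold sumR; f_equal; apply map_ext_in; intros a Ha.
  apply in_seq in Ha; apply H; lia.
Qed.

Lemma sumR_plus n f g : sumR n (fun i => f i + g i) = sumR n f + sumR n g.
Proof. unfold sumR; induction (seq 0 n); simpl; [ring | rewrite IHl; ring]. Qed.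

Lemma sumR_scal n c f : sumR n (fun i => c * f i) = c * sumR n f.
Proof. unfold sumR; induction (seq 0 n); simpl; [ring | rewrite IHl; ring]. Qed.

Lemma sumR_scal_r n c f : sumR n (fun i => f i * c) = sumR n f * c.
Proof. rewrite Rmult_comm, <- sumR_scal; apply sumR_ext; intros; ring. Qed.

Lemma sumR_zero n : sumR n (fun _ => 0) = 0.
Proof. unfold sumR; induction (seq 0 n); simpl; [ring | rewrite IHl; ring]. Qed.

Lemma sumR_swap n m (f : nat -> nat -> R) :
  sumR n (fun i => sumR m (fun j => f i j)) = sumR m (fun j => sumR n (fun i => f i j)).
Proof.
  unfold sumR at 1 4; induction (seq 0 n) as [|a l IH]; simpl.
  - symmetry; apply sumR_zero.
  - rewrite IH; symmetry; apply sumR_plus.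
Qed.

Lemma mulR_assoc X Y Z i j : mulR (mulR X Y) Z i j = mulR X (mulR Y Z) i j.
Proof. unfold_sums6; ring. Qed.

Lemma mulR_ext X X' Y Y' i j :
  (forall a b, (a < 6)%nat -> (b < 6)%nat -> X a b = X' a b) ->
  (forall a b, (a < 6)%nat -> (b < 6)%nat -> Y a b = Y' a b) ->
  (i < 6)%nat -> (j < 6)%nat -> mulR X Y i j = mulR X' Y' i j.
Proof. intros hX hY hi hj; apply sumR_ext; intros; rewrite hX, hY; auto. Qed.

Lemma mulR_sumR_l (a : nat -> R) (P : nat -> nat -> nat -> R) Q m l :
  sumR 6 (fun k => a k * mulR (P k) Q m l) =
  mulR (fun i j => sumR 6 (fun k => a k * P k i j)) Q m l.
Proof. unfold_sums6; ring. Qed.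

Lemma mulR_sumR_r (a : nat -> R) Q (P : nat -> nat -> nat -> R) m l :
  sumR 6 (fun k => a k * mulR Q (P k) m l) =
  mulR Q (fun i j => sumR 6 (fun k => a k * P k i j)) m l.
Proof. unfold_sums6; ring. Qed.

Lemma mulR_plus_r X Y Z i j : mulR X Y i j + mulR X Z i j = mulR X (fun a b => Y a b + Z a b) i j.
Proof. unfold_sums6; ring. Qed.

Definition idR : nat -> nat -> R := fun i j => if Nat.eqb i j then 1 else 0.

Definition frob (M N : nat -> nat -> R) : R := sumR 6 (fun m => sumR 6 (fun l => M m l * N m l)).

Lemma frob_ext_r M N N' :
  (forall m l, (m < 6)%nat -> (l < 6)%nat -> N m l = N' m l) -> frob M N = frob M N'.
Proof. intros H; apply sumR_ext; intros; apply sumR_ext; intros; rewrite H; auto. Qed.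

Lemma frob_ext_l M M' N :
  (forall i j, (i < 6)%nat -> (j < 6)%nat -> M i j = M' i j) -> frob M N = frob M' N.
Proof. intros H; apply sumR_ext; intros; apply sumR_ext; intros; rewrite H; auto. Qed.

Lemma frob_lin a b c M1 M2 M3 N :
  frob (fun i j => a * M1 i j - b * M2 i j + c * M3 i j) N =
  a * frob M1 N - b * frob M2 N + c * frob M3 N.
Proof. unfold frob; unfold_sums6; ring. Qed.

Lemma frob_mul_trR A M N : frob M (mulR (trR A) N) = frob (mulR A M) N.
Proof.
  unfold frob, mulR, trR.
  transitivity (sumR 6 (fun p => sumR 6 (fun m => sumR 6 (fun l => A p m * M m l * N p l)))).
  - symmetry; rewrite sumR_swap; apply sumR_ext; intros m _.
    rewrite sumR_swap; apply sumR_ext; intros l _.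
    rewrite <- sumR_scal; apply sumR_ext; intros; ring.
  - apply sumR_ext; intros p _; rewrite sumR_swap; apply sumR_ext; intros l _.
    rewrite <- sumR_scal_r; apply sumR_ext; intros; ring.
Qed.

Lemma sumR_frob (a : nat -> R) M (N : nat -> nat -> nat -> R) :
  sumR 6 (fun k => a k * frob M (N k)) = frob M (fun m l => sumR 6 (fun k => a k * N k m l)).
Proof.
  unfold frob.
  transitivity (sumR 6 (fun k => sumR 6 (fun m => sumR 6 (fun l => M m l * (a k * N k m l))))).
  - apply sumR_ext; intros k _; rewrite <- sumR_scal; apply sumR_ext; intros m _.
    rewrite <- sumR_scal; apply sumR_ext; intros; ring.
  - rewrite sumR_swap; apply sumR_ext; intros m _; rewrite sumR_swap; apply sumR_ext; intros l _.
    rewrite sumR_scal; reflexivity.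
Qed.

(** * Polynomials of degree at most two modulo a cubic *)

Definition poly2 : Type := (Cx * Cx * Cx)%type.

Definition p2eval (p : poly2) (z : Cx) : Cx :=
  let '(a, b, c) := p in Cadd a (Cadd (Cmul b z) (Cmul c (Cmul z z))).

Definition p2add (p w : poly2) : poly2 :=
  let '(a, b, c) := p in let '(a', b', c') := w in (Cadd a a', Cadd b b', Cadd c c').

Definition p2scale (s : Cx) (p : poly2) : poly2 :=
  let '(a, b, c) := p in (Cmul s a, Cmul s b, Cmul s c).

Lemma p2eval_add p w z : p2eval (p2add p w) z = Cadd (p2eval p z) (p2eval w z).
Proof. destruct p as [[a b] c], w as [[a' b'] c']; simpl; ring. Qed.

Lemma p2eval_scale s p z : p2eval (p2scale s p) z = Cmul s (p2eval p z).
Proof. destruct p as [[a b] c]; simpl; ring. Qed.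

Lemma p2_eq0_of_roots (l1 l2 l3 a b c : Cx) : l1 <> l2 -> l1 <> l3 -> l2 <> l3 ->
  p2eval (a, b, c) l1 = C0 -> p2eval (a, b, c) l2 = C0 -> p2eval (a, b, c) l3 = C0 ->
  a = C0 /\ b = C0 /\ c = C0.
Proof.
  simpl; intros h12 h13 h23 e1 e2 e3.
  assert (f12 : Cadd b (Cmul c (Cadd l1 l2)) = C0).
  { apply (Cmul_reg_l (Csub l1 l2)); [now apply Csub_neq0|].
    transitivity (Csub (Cadd a (Cadd (Cmul b l1) (Cmul c (Cmul l1 l1))))
                       (Cadd a (Cadd (Cmul b l2) (Cmul c (Cmul l2 l2))))); [ring|].
    rewrite e1, e2; ring. }
  assert (f13 : Cadd b (Cmul c (Cadd l1 l3)) = C0).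
  { apply (Cmul_reg_l (Csub l1 l3)); [now apply Csub_neq0|].
    transitivity (Csub (Cadd a (Cadd (Cmul b l1) (Cmul c (Cmul l1 l1))))
                       (Cadd a (Cadd (Cmul b l3) (Cmul c (Cmul l3 l3))))); [ring|].
    rewrite e1, e3; ring. }
  assert (hc : c = C0).
  { apply (Cmul_reg_l (Csub l2 l3)); [now apply Csub_neq0|].
    transitivity (Csub (Cadd b (Cmul c (Cadd l1 l2))) (Cadd b (Cmul c (Cadd l1 l3)))); [ring|].
    rewrite f12, f13; ring. }
  subst c; assert (hb : b = C0) by (rewrite <- f12; ring); subst b.
  repeat split; rewrite <- e1; ring.
Qed.

Lemma p2_eq_of_eval (l1 l2 l3 : Cx) (p w : poly2) :
  l1 <> l2 -> l1 <> l3 -> l2 <> l3 ->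
  p2eval p l1 = p2eval w l1 -> p2eval p l2 = p2eval w l2 -> p2eval p l3 = p2eval w l3 ->
  p = w.
Proof.
  destruct p as [[a b] c], w as [[a' b'] c']; intros h12 h13 h23 e1 e2 e3.
  assert (hd : forall z, p2eval (a, b, c) z = p2eval (a', b', c') z ->
    p2eval (Csub a a', Csub b b', Csub c c') z = C0).
  { simpl; intros z ez; transitivity (Csub (Cadd a (Cadd (Cmul b z) (Cmul c (Cmul z z))))
      (Cadd a' (Cadd (Cmul b' z) (Cmul c' (Cmul z z))))); [ring | rewrite ez; ring]. }
  destruct (p2_eq0_of_roots l1 l2 l3 _ _ _ h12 h13 h23 (hd _ e1) (hd _ e2) (hd _ e3))
    as (ha & hb & hc).
  now rewrite (Csub_eq0 _ _ ha), (Csub_eq0 _ _ hb), (Csub_eq0 _ _ hc).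
Qed.

Section QuotientRing.
Variables e1 e2 e3 : Cx.

(** Multiplication by [z] in [C[z] / (z^3 - e1 z^2 + e2 z - e3)]. *)
Definition p2mulX (p : poly2) : poly2 :=
  let '(a, b, c) := p in (Cmul e3 c, Csub a (Cmul e2 c), Cadd b (Cmul e1 c)).

Definition p2mul (p w : poly2) : poly2 :=
  let '(a, b, c) := p in
  p2add (p2scale a w) (p2add (p2scale b (p2mulX w)) (p2scale c (p2mulX (p2mulX w)))).

Variable z : Cx.
Hypothesis hz : Cmul z (Cmul z z) = Cadd (Csub (Cmul e1 (Cmul z z)) (Cmul e2 z)) e3.

Lemma p2eval_mulX p : p2eval (p2mulX p) z = Cmul z (p2eval p z).
Proof.
  destruct p as [[a b] c]; simpl.
  transitivity (Cadd (Cmul z (Cadd a (Cadd (Cmul b z) (Cmul c (Cmul z z)))))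
    (Cmul c (Csub (Cadd (Csub (Cmul e1 (Cmul z z)) (Cmul e2 z)) e3) (Cmul z (Cmul z z))))); [ring|].
  rewrite <- hz; ring.
Qed.

Lemma p2eval_mul p w : p2eval (p2mul p w) z = Cmul (p2eval p z) (p2eval w z).
Proof.
  destruct p as [[a b] c]; simpl p2mul.
  rewrite !p2eval_add, !p2eval_scale, !p2eval_mulX; simpl; ring.
Qed.
End QuotientRing.

Lemma root_of_cubic (l1 l2 l3 z : Cx) : z = l1 \/ z = l2 \/ z = l3 ->
  Cmul z (Cmul z z) =
  Cadd (Csub (Cmul (Cadd l1 (Cadd l2 l3)) (Cmul z z))
             (Cmul (Cadd (Cmul l1 l2) (Cadd (Cmul l1 l3) (Cmul l2 l3))) z))
       (Cmul l1 (Cmul l2 l3)).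
Proof. intros [-> | [-> | ->]]; ring. Qed.

Definition pair_comb (c1 c2 c3 d1 d2 d3 : Cx) : Cx :=
  Cadd (Cmul c1 (Cadd d2 d3)) (Cadd (Cmul c2 (Cadd d1 d3)) (Cmul c3 (Cadd d1 d2))).

Definition p2pair_comb (c1 c2 c3 : Cx) (b1 b2 b3 : poly2) : poly2 :=
  p2add (p2scale c1 (p2add b2 b3)) (p2add (p2scale c2 (p2add b1 b3)) (p2scale c3 (p2add b1 b2))).

Lemma p2eval_pair_comb c1 c2 c3 b1 b2 b3 z :
  p2eval (p2pair_comb c1 c2 c3 b1 b2 b3) z =
  pair_comb c1 c2 c3 (p2eval b1 z) (p2eval b2 z) (p2eval b3 z).
Proof.
  unfold p2pair_comb, pair_comb; rewrite !p2eval_add, !p2eval_scale, !p2eval_add; reflexivity.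
Qed.

(** * Skew-Hamiltonian matrices *)

Section SkewHamiltonian.
Variable A : nat -> nat -> R.
Hypothesis hA : forall i j, (i < 6)%nat -> (j < 6)%nat ->
  mulR (trR A) Jmat i j = mulR Jmat A i j.

(** [A = [[X, Y], [Z, X^T]]] with [Y] and [Z] skew-symmetric. *)
Lemma skewHamiltonian_entries :
  A 3 3 = A 0 0 /\ A 3 4 = A 1 0 /\ A 3 5 = A 2 0 /\
  A 4 3 = A 0 1 /\ A 4 4 = A 1 1 /\ A 4 5 = A 2 1 /\
  A 5 3 = A 0 2 /\ A 5 4 = A 1 2 /\ A 5 5 = A 2 2 /\
  A 1 3 = - A 0 4 /\ A 2 3 = - A 0 5 /\ A 2 4 = - A 1 5 /\
  A 4 0 = - A 3 1 /\ A 5 0 = - A 3 2 /\ A 5 1 = - A 4 2 /\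
  A 0 3 = 0 /\ A 1 4 = 0 /\ A 2 5 = 0 /\ A 3 0 = 0 /\ A 4 1 = 0 /\ A 5 2 = 0.
Proof.
  assert (E : forall i j, (i < 6)%nat -> (j < 6)%nat ->
    sumR 6 (fun k => A k i * Jmat k j) = sumR 6 (fun k => Jmat i k * A k j)) by exact hA.
  pose proof (E 0 3)%nat; pose proof (E 0 4)%nat; pose proof (E 0 5)%nat;
  pose proof (E 1 3)%nat; pose proof (E 1 4)%nat; pose proof (E 1 5)%nat;
  pose proof (E 2 3)%nat; pose proof (E 2 4)%nat; pose proof (E 2 5)%nat;
  pose proof (E 3 4)%nat; pose proof (E 3 5)%nat; pose proof (E 4 5)%nat;
  pose proof (E 1 0)%nat; pose proof (E 2 0)%nat; pose proof (E 2 1)%nat;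
  pose proof (E 3 3)%nat; pose proof (E 4 4)%nat; pose proof (E 5 5)%nat;
  pose proof (E 0 0)%nat; pose proof (E 1 1)%nat; pose proof (E 2 2)%nat; clear E.
  repeat match goal with h : (?a < 6)%nat -> (?b < 6)%nat -> _ |- _ =>
    specialize (h ltac:(lia) ltac:(lia)) end.
  cbv [sumR map seq fold_right Jmat Nat.ltb Nat.leb Nat.eqb andb Nat.add] in *.
  repeat split; lra.
Qed.

Ltac normalize_entries :=
  destruct skewHamiltonian_entries as
    (e1 & e2 & e3 & e4 & e5 & e6 & e7 & e8 & e9 & e10 & e11 & e12 & e13 & e14 & e15 &
     e16 & e17 & e18 & e19 & e20 & e21);
  rewrite ?e1, ?e2, ?e3, ?e4, ?e5, ?e6, ?e7, ?e8, ?e9, ?e10, ?e11, ?e12, ?e13, ?e14,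
    ?e15, ?e16, ?e17, ?e18, ?e19, ?e20, ?e21.

(** The coefficients of the cubic whose square is the characteristic polynomial. *)
Definition char_c1 := A 0 0 + A 1 1 + A 2 2.
Definition char_c2 :=
  A 1 1 * A 2 2 - A 1 2 * A 2 1 + A 0 0 * A 2 2 - A 0 2 * A 2 0 + A 0 0 * A 1 1 - A 0 1 * A 1 0
  + A 0 4 * A 3 1 + A 0 5 * A 3 2 + A 1 5 * A 4 2.
Definition char_c3 :=
  A 0 0 * (A 1 1 * A 2 2 - A 1 2 * A 2 1) - A 0 1 * (A 1 0 * A 2 2 - A 1 2 * A 2 0)
  + A 0 2 * (A 1 0 * A 2 1 - A 1 1 * A 2 0)
  + A 0 2 * A 1 5 * A 3 1 - A 1 2 * A 0 5 * A 3 1 + A 2 2 * A 0 4 * A 3 1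
  - A 0 1 * A 1 5 * A 3 2 + A 1 1 * A 0 5 * A 3 2 - A 2 1 * A 0 4 * A 3 2
  + A 0 0 * A 1 5 * A 4 2 - A 1 0 * A 0 5 * A 4 2 + A 2 0 * A 0 4 * A 4 2.

Lemma det_sub_skewHamiltonian r :
  detR 6 (fun i j => (if Nat.eqb i j then r else 0) - A i j) =
  (r ^ 3 - char_c1 * r ^ 2 + char_c2 * r - char_c3) ^ 2.
Proof.
  cbv [detR sumR minor map seq fold_right Nat.ltb Nat.leb Nat.eqb].
  unfold char_c1, char_c2, char_c3; normalize_entries; ring.
Qed.

Lemma cayley_hamilton_skewHamiltonian i j : (i < 6)%nat -> (j < 6)%nat ->
  mulR A (mulR A A) i j =
  char_c1 * mulR A A i j - char_c2 * A i j + char_c3 * (if Nat.eqb i j then 1 else 0).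
Proof.
  intros hi hj.
  destruct i as [|[|[|[|[|[|i]]]]]]; try lia; destruct j as [|[|[|[|[|[|j]]]]]]; try lia;
    cbv [mulR sumR map seq fold_right Nat.eqb]; unfold char_c1, char_c2, char_c3;
    normalize_entries; ring.
Qed.
End SkewHamiltonian.

Lemma detC_RC n M : detC n (fun i j => RC (M i j)) = RC (detR n M).
Proof.
  revert M; induction n as [|n IH]; intros M; [reflexivity|].
  simpl detR; rewrite <- sumC_RC; apply sumC_ext; intros j _.
  change (minor j (fun i k => RC (M i k))) with (fun i k => RC (minor j M i k)).
  rewrite IH, !RC_mul; ring.
Qed.

Lemma charpolyC_RC A r :
  charpolyC A (RC r) = RC (detR 6 (fun i j => (if Nat.eqb i j then r else 0) - A i j)).
Proof.
  unfold charpolyC; rewrite <- detC_RC; f_equal.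
  apply functional_extensionality; intro i; apply functional_extensionality; intro j.
  destruct (Nat.eqb i j); unfold Csub, Cadd, Copp, RC, C0; simpl; f_equal; ring.
Qed.

(** Both cubics are monic, so [c^2 = p^2] forces [c = p]; six sample points suffice. *)
Lemma vieta_of_squared_cubic (l1 l2 l3 : Cx) (c1 c2 c3 : R) :
  (forall r : R,
     let c := Cmul (Csub (RC r) l1) (Cmul (Csub (RC r) l2) (Csub (RC r) l3)) in
     Cmul c c = RC ((r ^ 3 - c1 * r ^ 2 + c2 * r - c3) ^ 2)) ->
  RC c1 = Cadd l1 (Cadd l2 l3) /\
  RC c2 = Cadd (Cmul l1 l2) (Cadd (Cmul l1 l3) (Cmul l2 l3)) /\
  RC c3 = Cmul l1 (Cmul l2 l3).
Proof.
  intros H.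
  destruct l1 as [a1 b1], l2 as [a2 b2], l3 as [a3 b3].
  pose proof (H 0); pose proof (H 1); pose proof (H 2);
  pose proof (H 3); pose proof (H 4); pose proof (H 5); clear H.
  unfold Cmul, Csub, Cadd, Copp, RC in *; simpl in *.
  repeat match goal with h : (_, _) = (_, _) |- _ => injection h as ?h ?h end.
  assert (e1 : c1 = a1 + a2 + a3) by lra.
  assert (f1 : b3 = - b1 - b2) by lra.
  subst c1 b3.
  assert (e2 : c2 = a1*a2 + a1*a3 + a2*a3 - b1*b2 - b1 * (-b1-b2) - b2*(-b1-b2)) by lra.
  assert (f2 : a1*b2 + a2*b1 + a1*(-b1-b2) + a3*b1 + a2*(-b1-b2) + a3*b2 = 0) by lra.
  assert (f2' : (a1 + a2 + a3) *
    (a1*b2 + a2*b1 + a1*(-b1-b2) + a3*b1 + a2*(-b1-b2) + a3*b2) = 0) by (rewrite f2; ring).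
  subst c2.
  assert (e3 : c3 = a1*a2*a3 - a1*b2*(-b1-b2) - a2*b1*(-b1-b2) - a3*b1*b2) by lra.
  assert (f3 : a1*a2*(-b1-b2) + a1*b2*a3 + b1*a2*a3 - b1*b2*(-b1-b2) = 0) by lra.
  subst c3.
  split; [|split]; f_equal; try ring; lra.
Qed.

Lemma derivable_pt_lim_eq f t d d' : derivable_pt_lim f t d -> d = d' -> derivable_pt_lim f t d'.
Proof. now intros H <-. Qed.

Lemma derivable_pt_lim_sumR n (f : nat -> R -> R) d t :
  (forall i, (i < n)%nat -> derivable_pt_lim (f i) t (d i)) ->
  derivable_pt_lim (fun s => sumR n (fun i => f i s)) t (sumR n d).
Proof.
  intros H; unfold sumR.
  assert (Hl : forall i, In i (seq 0 n) -> derivable_pt_lim (f i) t (d i))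
    by (intros i Hi; apply in_seq in Hi; apply H; lia).
  revert Hl; induction (seq 0 n) as [|a l IH]; intros Hl; simpl.
  - apply derivable_pt_lim_const.
  - apply (derivable_pt_lim_plus (f a) (fun s => fold_right Rplus 0 (map (fun i => f i s) l)));
      [apply Hl; simpl; auto | apply IH; intros; apply Hl; simpl; auto].
Qed.

Lemma derivable_pt_lim_scal c f t d :
  derivable_pt_lim f t d -> derivable_pt_lim (fun s => c * f s) t (c * d).
Proof.
  intros H; eapply derivable_pt_lim_eq;
    [apply (derivable_pt_lim_mult (fun _ => c) f); [apply derivable_pt_lim_const | exact H] | ring].
Qed.

Lemma derivable_pt_lim_affine a b t0 : derivable_pt_lim (fun t => a + (t - t0) * b) t0 b.
Proof.
  eapply derivable_pt_lim_eq.
  - apply (derivable_pt_lim_plus (fun _ => a) (fun t => (t - t0) * b));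
      [apply derivable_pt_lim_const|].
    apply (derivable_pt_lim_mult (fun t => t - t0) (fun _ => b)); [|apply derivable_pt_lim_const].
    apply (derivable_pt_lim_minus id (fun _ => t0));
      [apply derivable_pt_lim_id | apply derivable_pt_lim_const].
  - ring.
Qed.

Lemma derivable_pt_lim_sq g t d :
  derivable_pt_lim g t d -> derivable_pt_lim (fun s => g s ^ 2) t (2 * g t * d).
Proof.
  intros H; apply (derivable_pt_lim_ext (fun s => g s * g s)); [intros; ring|].
  eapply derivable_pt_lim_eq; [apply (derivable_pt_lim_mult g g); exact H | ring].
Qed.

Lemma derivable_pt_lim_frob M (N : R -> nat -> nat -> R) dN t :
  (forall m l, (m < 6)%nat -> (l < 6)%nat -> derivable_pt_lim (fun s => N s m l) t (dN m l)) ->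
  derivable_pt_lim (fun s => frob M (N s)) t (frob M dN).
Proof.
  intros H; apply derivable_pt_lim_sumR; intros m hm.
  apply derivable_pt_lim_sumR with (f := fun l s => M m l * N s m l); intros l hl.
  apply derivable_pt_lim_scal; auto.
Qed.

Lemma derivable_pt_lim_mulR (X Y : R -> nat -> nat -> R) dX dY t i j :
  (forall a b, (a < 6)%nat -> (b < 6)%nat -> derivable_pt_lim (fun s => X s a b) t (dX a b)) ->
  (forall a b, (a < 6)%nat -> (b < 6)%nat -> derivable_pt_lim (fun s => Y s a b) t (dY a b)) ->
  (i < 6)%nat -> (j < 6)%nat ->
  derivable_pt_lim (fun s => mulR (X s) (Y s) i j) t (mulR dX (Y t) i j + mulR (X t) dY i j).
Proof.
  intros hX hY hi hj; unfold mulR; rewrite <- sumR_plus.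
  apply derivable_pt_lim_sumR with (f := fun k s => X s i k * Y s k j); intros k hk.
  apply (derivable_pt_lim_mult (fun s => X s i k) (fun s => Y s k j)); auto.
Qed.

Definition is_derivC (f : R -> Cx) (t : R) (d : Cx) : Prop :=
  derivable_pt_lim (fun s => fst (f s)) t (fst d) /\
  derivable_pt_lim (fun s => snd (f s)) t (snd d).

Lemma is_derivC_eq f t d d' : is_derivC f t d -> d = d' -> is_derivC f t d'.
Proof. now intros H <-. Qed.

Lemma is_derivC_ext f g t d : (forall s, f s = g s) -> is_derivC f t d -> is_derivC g t d.
Proof. intros H; replace g with f; [auto | apply functional_extensionality; auto]. Qed.

Lemma is_derivC_unique f t d d' : is_derivC f t d -> is_derivC f t d' -> d = d'.
Proof.
  intros [h1 h2] [h3 h4]; destruct d, d'; simpl in *.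
  f_equal; eapply uniqueness_limite; eauto.
Qed.

Lemma is_derivC_const c t : is_derivC (fun _ => c) t C0.
Proof. split; apply derivable_pt_lim_const. Qed.

Lemma is_derivC_RC f t d : derivable_pt_lim f t d -> is_derivC (fun s => RC (f s)) t (RC d).
Proof. split; simpl; [auto | apply derivable_pt_lim_const]. Qed.

Lemma is_derivC_add f g t a b :
  is_derivC f t a -> is_derivC g t b -> is_derivC (fun s => Cadd (f s) (g s)) t (Cadd a b).
Proof.
  intros [h1 h2] [h3 h4]; split; simpl.
  - apply (derivable_pt_lim_plus (fun s => fst (f s)) (fun s => fst (g s))); auto.
  - apply (derivable_pt_lim_plus (fun s => snd (f s)) (fun s => snd (g s))); auto.
Qed.

Lemma is_derivC_opp f t a : is_derivC f t a -> is_derivC (fun s => Copp (f s)) t (Copp a).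
Proof.
  intros [h1 h2]; split; simpl.
  - apply (derivable_pt_lim_opp (fun s => fst (f s))); auto.
  - apply (derivable_pt_lim_opp (fun s => snd (f s))); auto.
Qed.

Lemma is_derivC_mul f g t a b : is_derivC f t a -> is_derivC g t b ->
  is_derivC (fun s => Cmul (f s) (g s)) t (Cadd (Cmul a (g t)) (Cmul (f t) b)).
Proof.
  intros [h1 h2] [h3 h4]; split; simpl.
  - eapply derivable_pt_lim_eq.
    + apply (derivable_pt_lim_minus (fun s => fst (f s) * fst (g s))
        (fun s => snd (f s) * snd (g s)));
        [apply (derivable_pt_lim_mult (fun s => fst (f s)) (fun s => fst (g s)))
        |apply (derivable_pt_lim_mult (fun s => snd (f s)) (fun s => snd (g s)))]; eauto.
    + ring.
  - eapply derivable_pt_lim_eq.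
    + apply (derivable_pt_lim_plus (fun s => fst (f s) * snd (g s))
        (fun s => snd (f s) * fst (g s)));
        [apply (derivable_pt_lim_mult (fun s => fst (f s)) (fun s => snd (g s)))
        |apply (derivable_pt_lim_mult (fun s => snd (f s)) (fun s => fst (g s)))]; eauto.
    + ring.
Qed.

Lemma is_derivC_scal c f t a : is_derivC f t a -> is_derivC (fun s => Cmul c (f s)) t (Cmul c a).
Proof.
  intros H; eapply is_derivC_eq;
    [apply is_derivC_mul; [apply is_derivC_const | exact H] | cbv beta; ring].
Qed.

Lemma is_derivC_inv f t a : is_derivC f t a -> f t <> C0 ->
  is_derivC (fun s => Cinv (f s)) t (Copp (Cmul a (Cmul (Cinv (f t)) (Cinv (f t))))).
Proof.
  intros [h1 h2] hz; destruct (f t) as [p q] eqn:E.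
  assert (hn : p * p + q * q <> 0) by (intros h0; apply hz; unfold C0, RC; f_equal; nra).
  assert (hN : derivable_pt_lim (fun s => fst (f s) ^ 2 + snd (f s) ^ 2) t
                 (2 * p * fst a + 2 * q * snd a)).
  { eapply derivable_pt_lim_eq.
    - apply (derivable_pt_lim_plus (fun s => fst (f s) ^ 2) (fun s => snd (f s) ^ 2));
        apply derivable_pt_lim_sq; eauto.
    - cbv beta; rewrite E; simpl; ring. }
  assert (hN0 : fst (f t) ^ 2 + snd (f t) ^ 2 <> 0) by (rewrite E; simpl; nra).
  split; unfold Cinv; simpl.
  - eapply derivable_pt_lim_eq.
    + apply (derivable_pt_lim_div (fun s => fst (f s)) _ _ _ _ h1 hN hN0).
    + cbv beta; rewrite E; simpl; unfold Rsqr; field; auto.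
  - eapply derivable_pt_lim_eq.
    + apply (derivable_pt_lim_div (fun s => - snd (f s)) _ _ _ _
        (derivable_pt_lim_opp (fun s => snd (f s)) _ _ h2) hN hN0).
    + cbv beta; rewrite E; simpl; unfold Rsqr; field; auto.
Qed.

Lemma upd_same (x : nat -> R) k : upd x k (x k) = x.
Proof.
  apply functional_extensionality; intro m; unfold upd.
  destruct (Nat.eqb_spec m k); congruence.
Qed.

(** * The gradient of tr (M^T f0'^2) *)

Definition qform T (M : nat -> nat -> R) (y : nat -> R) : R :=
  (1 / 8) * frob M (mulR (df0 T y) (df0 T y)).

Definition df0_partial T (k : nat) : nat -> nat -> R := mulR Jmat (fun a b => 6 * T a b k).

Definition qform_partial T (x : nat -> R) M k : R :=
  (1 / 8) * frob M (fun m l => mulR (df0_partial T k) (df0 T x) m l +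
                               mulR (df0 T x) (df0_partial T k) m l).

Lemma df0_upd T x k t m n : (k < 6)%nat ->
  df0 T (upd x k t) m n = df0 T x m n + (t - x k) * df0_partial T k m n.
Proof.
  intros hk; unfold df0, df0_partial, mulR.
  rewrite <- sumR_scal, <- sumR_plus; apply sumR_ext; intros p _.
  unfold hessH0, upd; destruct k as [|[|[|[|[|[|k]]]]]]; try lia; unfold_sums6; simpl; ring.
Qed.

Lemma derivable_qform T x M k : (k < 6)%nat ->
  derivable_pt_lim (fun t => qform T M (upd x k t)) (x k) (qform_partial T x M k).
Proof.
  intros hk; apply derivable_pt_lim_scal, derivable_pt_lim_frob; intros m l hm hl.
  assert (hF : forall a b, (a < 6)%nat -> (b < 6)%nat ->
    derivable_pt_lim (fun t => df0 T (upd x k t) a b) (x k) (df0_partial T k a b)).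
  { intros a b _ _.
    apply (derivable_pt_lim_ext (fun t => df0 T x a b + (t - x k) * df0_partial T k a b));
      [intros t; symmetry; apply df0_upd, hk | apply derivable_pt_lim_affine]. }
  pose proof (derivable_pt_lim_mulR (fun t => df0 T (upd x k t)) (fun t => df0 T (upd x k t))
    _ _ (x k) m l hF hF hm hl) as D.
  cbv beta in D; rewrite upd_same in D; exact D.
Qed.

Section Commutation.
Variables (A : nat -> nat -> R) (T : nat -> nat -> nat -> R).
Hypothesis hA : forall i j, (i < 6)%nat -> (j < 6)%nat ->
  mulR (trR A) Jmat i j = mulR Jmat A i j.
Hypothesis hT : sym3 T.
Hypothesis hH : forall x i j, (i < 6)%nat -> (j < 6)%nat ->
  mulR A (hessH0 T x) i j = mulR (hessH0 T x) (trR A) i j.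

Lemma hessH0_basis b m a : (b < 6)%nat ->
  hessH0 T (fun c => if Nat.eqb c b then 1 else 0) m a = 6 * T m a b.
Proof.
  intros hb; unfold hessH0; destruct b as [|[|[|[|[|[|b]]]]]]; try lia; unfold_sums6; simpl; ring.
Qed.

Lemma sym3_cycle a b c : (a < 6)%nat -> (b < 6)%nat -> (c < 6)%nat -> T a b c = T c a b.
Proof.
  intros ha hb hc; destruct (hT a b c) as [_ h1]; auto; destruct (hT a c b) as [h2 _]; auto.
  congruence.
Qed.

(** The hypothesis [A Hess H0 = Hess H0 A^T] at the basis vectors. *)
Lemma tensor_commutation k a b : (k < 6)%nat -> (a < 6)%nat -> (b < 6)%nat ->
  sumR 6 (fun c => A k c * T a b c) = sumR 6 (fun d => A a d * T d b k).
Proof.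
  intros hk ha hb.
  pose proof (hH (fun c => if Nat.eqb c b then 1 else 0) k a hk ha) as h; unfold mulR, trR in h.
  apply (Rmult_eq_reg_l 6); [|lra].
  rewrite <- !sumR_scal.
  transitivity (sumR 6 (fun c => A k c * hessH0 T (fun c => if Nat.eqb c b then 1 else 0) c a)).
  { apply sumR_ext; intros c hc; rewrite hessH0_basis, (sym3_cycle a b c); auto; ring. }
  rewrite h; apply sumR_ext; intros d hd.
  rewrite hessH0_basis, (sym3_cycle k d b), (sym3_cycle b k d); auto; ring.
Qed.

Lemma df0_partial_commutation k m n : (k < 6)%nat -> (m < 6)%nat -> (n < 6)%nat ->
  sumR 6 (fun c => A k c * df0_partial T c m n) = mulR (trR A) (df0_partial T k) m n.
Proof.
  intros hk hm hn; unfold df0_partial; rewrite mulR_sumR_r, <- (mulR_assoc (trR A) Jmat).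
  rewrite (mulR_ext (mulR (trR A) Jmat) (mulR Jmat A) (fun a b => 6 * T a b k)
    (fun a b => 6 * T a b k)) by (auto; intros; apply hA; auto).
  rewrite mulR_assoc; apply mulR_ext; auto.
  intros a b ha hb; unfold mulR.
  transitivity (6 * sumR 6 (fun c => A k c * T a b c));
    [rewrite <- sumR_scal; apply sumR_ext; intros; ring|].
  rewrite tensor_commutation, <- sumR_scal by auto; apply sumR_ext; intros; ring.
Qed.

Lemma df0_trR_commute x m n : (m < 6)%nat -> (n < 6)%nat ->
  mulR (df0 T x) (trR A) m n = mulR (trR A) (df0 T x) m n.
Proof.
  intros hm hn; unfold df0; rewrite mulR_assoc.
  rewrite (mulR_ext Jmat Jmat (mulR (hessH0 T x) (trR A)) (mulR A (hessH0 T x)))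
    by (auto; intros; symmetry; apply hH; auto).
  rewrite <- (mulR_assoc Jmat A).
  rewrite (mulR_ext (mulR Jmat A) (mulR (trR A) Jmat) (hessH0 T x) (hessH0 T x))
    by (auto; intros; symmetry; apply hA; auto).
  apply mulR_assoc.
Qed.

Lemma qform_partial_commutation x M k : (k < 6)%nat ->
  sumR 6 (fun c => A k c * qform_partial T x M c) = qform_partial T x (mulR A M) k.
Proof.
  intros hk; unfold qform_partial; rewrite <- frob_mul_trR.
  transitivity (1 / 8 * sumR 6 (fun c => A k c * frob M (fun m l =>
    mulR (df0_partial T c) (df0 T x) m l + mulR (df0 T x) (df0_partial T c) m l)));
    [rewrite <- sumR_scal; apply sumR_ext; intros; ring|].
  rewrite sumR_frob; f_equal; apply frob_ext_r; intros m l hm hl.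
  transitivity (sumR 6 (fun c => A k c * mulR (df0_partial T c) (df0 T x) m l) +
                sumR 6 (fun c => A k c * mulR (df0 T x) (df0_partial T c) m l));
    [rewrite <- sumR_plus; apply sumR_ext; intros; ring|].
  rewrite mulR_sumR_l, mulR_sumR_r.
  rewrite (mulR_ext _ (mulR (trR A) (df0_partial T k)) (df0 T x) (df0 T x))
    by (auto; intros; apply df0_partial_commutation; auto).
  rewrite (mulR_ext (df0 T x) (df0 T x) _ (mulR (trR A) (df0_partial T k)))
    by (auto; intros; apply df0_partial_commutation; auto).
  rewrite mulR_assoc, <- (mulR_assoc (df0 T x) (trR A)).
  rewrite (mulR_ext (mulR (df0 T x) (trR A)) (mulR (trR A) (df0 T x)) (df0_partial T k)
    (df0_partial T k)) by (auto; intros; apply df0_trR_commute; auto).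
  rewrite mulR_assoc; apply mulR_plus_r.
Qed.
End Commutation.

Section CyclicGradients.
Variables (A : nat -> nat -> R) (T : nat -> nat -> nat -> R) (x : nat -> R).
Hypothesis hA : forall i j, (i < 6)%nat -> (j < 6)%nat ->
  mulR (trR A) Jmat i j = mulR Jmat A i j.
Hypothesis hT : sym3 T.
Hypothesis hH : forall x i j, (i < 6)%nat -> (j < 6)%nat ->
  mulR A (hessH0 T x) i j = mulR (hessH0 T x) (trR A) i j.

Lemma qform_partial_cyclic0 k : (k < 6)%nat ->
  sumR 6 (fun l => A k l * qform_partial T x idR l) = qform_partial T x A k.
Proof.
  intros hk; rewrite qform_partial_commutation by auto; unfold qform_partial; f_equal.
  apply frob_ext_l; intros i j hi hj; unfold idR.
  destruct j as [|[|[|[|[|[|j]]]]]]; try lia; unfold_sums6; simpl; ring.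
Qed.

Lemma qform_partial_cyclic1 k : (k < 6)%nat ->
  sumR 6 (fun l => A k l * qform_partial T x A l) = qform_partial T x (mulR A A) k.
Proof. intros hk; apply qform_partial_commutation; auto. Qed.

Lemma qform_partial_cyclic2 k : (k < 6)%nat ->
  sumR 6 (fun l => A k l * qform_partial T x (mulR A A) l) =
  char_c1 A * qform_partial T x (mulR A A) k - char_c2 A * qform_partial T x A k +
  char_c3 A * qform_partial T x idR k.
Proof.
  intros hk; rewrite qform_partial_commutation by auto; unfold qform_partial.
  rewrite (frob_ext_l _
    (fun i j => char_c1 A * mulR A A i j - char_c2 A * A i j + char_c3 A * idR i j))
    by (intros; apply cayley_hamilton_skewHamiltonian; auto).
  rewrite frob_lin; ring.
Qed.
End CyclicGradients.

Definition p2vec (V0 V1 V2 : nat -> R) (p : poly2) (k : nat) : Cx :=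
  let '(a, b, c) := p in
  Cadd (Cmul a (RC (V0 k))) (Cadd (Cmul b (RC (V1 k))) (Cmul c (RC (V2 k)))).

Lemma p2vec_add V0 V1 V2 p w k :
  p2vec V0 V1 V2 (p2add p w) k = Cadd (p2vec V0 V1 V2 p k) (p2vec V0 V1 V2 w k).
Proof. destruct p as [[a b] c], w as [[a' b'] c']; simpl; ring. Qed.

Lemma p2vec_scale V0 V1 V2 s p k : p2vec V0 V1 V2 (p2scale s p) k = Cmul s (p2vec V0 V1 V2 p k).
Proof. destruct p as [[a b] c]; simpl; ring. Qed.

Lemma p2vec_pair_comb V0 V1 V2 c1 c2 c3 b1 b2 b3 k :
  p2vec V0 V1 V2 (p2pair_comb c1 c2 c3 b1 b2 b3) k =
  pair_comb c1 c2 c3 (p2vec V0 V1 V2 b1 k) (p2vec V0 V1 V2 b2 k) (p2vec V0 V1 V2 b3 k).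
Proof.
  unfold p2pair_comb, pair_comb; rewrite !p2vec_add, !p2vec_scale, !p2vec_add; reflexivity.
Qed.

Section CyclicVectors.
Variables (A : nat -> nat -> R) (V0 V1 V2 : nat -> R) (c1 c2 c3 : R).
Hypothesis hV01 : forall k, (k < 6)%nat -> sumR 6 (fun l => A k l * V0 l) = V1 k.
Hypothesis hV12 : forall k, (k < 6)%nat -> sumR 6 (fun l => A k l * V1 l) = V2 k.
Hypothesis hV20 : forall k, (k < 6)%nat ->
  sumR 6 (fun l => A k l * V2 l) = c1 * V2 k - c2 * V1 k + c3 * V0 k.

Lemma sumC_A_p2vec p k : (k < 6)%nat ->
  sumC 6 (fun l => Cmul (RC (A k l)) (p2vec V0 V1 V2 p l)) =
  p2vec V0 V1 V2 (p2mulX (RC c1) (RC c2) (RC c3) p) k.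
Proof.
  destruct p as [[a b] c]; intros hk.
  transitivity (Cadd (Cmul a (RC (sumR 6 (fun l => A k l * V0 l))))
    (Cadd (Cmul b (RC (sumR 6 (fun l => A k l * V1 l))))
          (Cmul c (RC (sumR 6 (fun l => A k l * V2 l)))))).
  - rewrite <- !sumC_RC, <- !sumC_scal, <- !sumC_plus.
    apply sumC_ext; intros; simpl; rewrite !RC_mul; ring.
  - rewrite hV01, hV12, hV20, RC_add, !RC_sub, !RC_mul by exact hk; simpl; ring.
Qed.

Lemma sumC_Bmat_p2vec al be ga p k : (k < 6)%nat ->
  sumC 6 (fun l => Cmul (Bmat A al be ga k l) (p2vec V0 V1 V2 p l)) =
  p2vec V0 V1 V2 (p2mul (RC c1) (RC c2) (RC c3) (al, be, ga) p) k.
Proof.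
  intros hk.
  transitivity (Cadd (Cmul al (sumC 6 (fun l => Cmul (idC k l) (p2vec V0 V1 V2 p l))))
    (Cadd (Cmul be (sumC 6 (fun l => Cmul (RC (A k l)) (p2vec V0 V1 V2 p l))))
          (Cmul ga (sumC 6 (fun l => Cmul (RC (mulR A A k l)) (p2vec V0 V1 V2 p l)))))).
  - rewrite <- !sumC_scal, <- !sumC_plus; apply sumC_ext; intros; unfold Bmat; ring.
  - rewrite sumC_idC, sumC_mulR by exact hk.
    rewrite (sumC_ext 6
      (fun m => Cmul (RC (A k m)) (sumC 6 (fun l => Cmul (RC (A m l)) (p2vec V0 V1 V2 p l))))
      (fun m => Cmul (RC (A k m)) (p2vec V0 V1 V2 (p2mulX (RC c1) (RC c2) (RC c3) p) m)))
      by (intros; rewrite sumC_A_p2vec; auto).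
    rewrite !sumC_A_p2vec by exact hk; simpl p2mul.
    rewrite !p2vec_add, !p2vec_scale; reflexivity.
Qed.
End CyclicVectors.

Lemma sumC2_RC_frob M G :
  sumC 6 (fun k => sumC 6 (fun j => RC (M j k * G j k))) = RC (frob M G).
Proof.
  rewrite sumC_swap; unfold frob; rewrite <- sumC_RC.
  apply sumC_ext; intros; apply sumC_RC.
Qed.

Lemma traceC_Bmat A G al be ga :
  traceC (mulC (trC (Bmat A al be ga)) (embC G)) =
  Cadd (Cmul al (RC (frob idR G)))
    (Cadd (Cmul be (RC (frob A G))) (Cmul ga (RC (frob (mulR A A) G)))).
Proof.
  rewrite <- !sumC2_RC_frob, <- !sumC_scal, <- !sumC_plus; apply sumC_ext; intros k _.
  rewrite <- !sumC_scal, <- !sumC_plus; apply sumC_ext; intros j _.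
  unfold trC, Bmat, embC, idC, idR; destruct (Nat.eqb j k); rewrite !RC_mul;
    change (RC 1) with Defs.C1; change (RC 0) with C0; ring.
Qed.

Lemma qfun_Bmat A T al be ga y :
  qfun (Bmat A al be ga) T y =
  Cadd (Cmul al (RC (qform T idR y)))
    (Cadd (Cmul be (RC (qform T A y))) (Cmul ga (RC (qform T (mulR A A) y)))).
Proof. unfold qfun, qform; rewrite traceC_Bmat, !RC_mul; ring. Qed.

Lemma is_derivC_qfun A T al be ga x k : (k < 6)%nat ->
  is_derivC (fun t => qfun (Bmat A al be ga) T (upd x k t)) (x k)
    (p2vec (qform_partial T x idR) (qform_partial T x A) (qform_partial T x (mulR A A))
       (al, be, ga) k).
Proof.
  intros hk; eapply is_derivC_ext; [intros; symmetry; apply qfun_Bmat|].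
  apply is_derivC_add; [|apply is_derivC_add];
    apply is_derivC_scal, is_derivC_RC, derivable_qform, hk.
Qed.

Definition sgn (i j : nat) : Cx := if Nat.eqb i j then RC (-1) else RC 1.

Definition sweight (s : Cx) (eps : R) : Cx := Cmul (RC (2 * eps ^ 2)) (Cmul (Cinv s) (Cinv s)).

Lemma is_derivC_inv_sfun fa fb t da db eps :
  is_derivC fa t da -> is_derivC fb t db -> sfun (fa t) (fb t) eps <> C0 ->
  is_derivC (fun s => Cinv (sfun (fa s) (fb s) eps)) t
    (Cmul (sweight (sfun (fa t) (fb t) eps) eps) (Cadd da db)).
Proof.
  intros ha hb hz; eapply is_derivC_eq.
  - apply (is_derivC_inv (fun s => sfun (fa s) (fb s) eps)); [|exact hz].
    unfold sfun, Csub; apply is_derivC_add; [apply is_derivC_const|].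
    apply is_derivC_opp, is_derivC_scal, is_derivC_add; eauto.
  - unfold sweight; ring.
Qed.

Lemma Qv_signed i q1 q2 q3 eps : (1 <= i <= 3)%nat ->
  Qv i q1 q2 q3 eps =
  Cmul (RC (1 / (4 * eps ^ 2)))
    (Cadd (Copp Defs.C1) (Cadd (Cmul (sgn i 1) (Cinv (sfun q2 q3 eps)))
      (Cadd (Cmul (sgn i 2) (Cinv (sfun q1 q3 eps))) (Cmul (sgn i 3) (Cinv (sfun q1 q2 eps)))))).
Proof.
  intros hi; destruct i as [|[|[|[|i]]]]; try lia; cbv [Qv Q1v Q2v Q3v sgn Nat.eqb];
    rewrite Cinv_C1, RC_opp1; change (RC 1) with Defs.C1; ring.
Qed.

Section DerivativesPQ.
Variables (f1 f2 f3 : R -> Cx) (t eps : R) (d1 d2 d3 : Cx).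
Hypotheses (h1 : is_derivC f1 t d1) (h2 : is_derivC f2 t d2) (h3 : is_derivC f3 t d3).
Hypothesis hs : s123 (f1 t) (f2 t) (f3 t) eps <> C0.

Let w1 := sweight (sfun (f2 t) (f3 t) eps) eps.
Let w2 := sweight (sfun (f1 t) (f3 t) eps) eps.
Let w3 := sweight (sfun (f1 t) (f2 t) eps) eps.

Let hinv1 := is_derivC_inv_sfun f2 f3 t d2 d3 eps h2 h3
  ltac:(intros h; apply hs; unfold s123; rewrite h; ring).
Let hinv2 := is_derivC_inv_sfun f1 f3 t d1 d3 eps h1 h3
  ltac:(intros h; apply hs; unfold s123; rewrite h; ring).
Let hinv3 := is_derivC_inv_sfun f1 f2 t d1 d2 eps h1 h2
  ltac:(intros h; apply hs; unfold s123; rewrite h; ring).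

Lemma is_derivC_P0v :
  is_derivC (fun s => P0v (f1 s) (f2 s) (f3 s) eps) t
    (Cmul (RC (1 / 4)) (pair_comb w1 w2 w3 d1 d2 d3)).
Proof.
  unfold P0v; eapply is_derivC_eq.
  - apply is_derivC_scal, is_derivC_add;
      [apply is_derivC_add; [apply is_derivC_const | exact hinv1]|].
    apply is_derivC_add; [exact hinv2 | exact hinv3].
  - unfold pair_comb, w1, w2, w3; ring.
Qed.

Lemma is_derivC_Qv i : (1 <= i <= 3)%nat ->
  is_derivC (fun s => Qv i (f1 s) (f2 s) (f3 s) eps) t
    (Cmul (RC (1 / (4 * eps ^ 2)))
      (pair_comb (Cmul (sgn i 1) w1) (Cmul (sgn i 2) w2) (Cmul (sgn i 3) w3) d1 d2 d3)).
Proof.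
  intros hi; eapply is_derivC_ext; [intros s; symmetry; apply Qv_signed, hi|].
  eapply is_derivC_eq.
  - apply is_derivC_scal, is_derivC_add; [apply is_derivC_const|].
    apply is_derivC_add; [apply is_derivC_scal, hinv1|].
    apply is_derivC_add; apply is_derivC_scal; [exact hinv2 | exact hinv3].
  - unfold pair_comb, w1, w2, w3; ring.
Qed.
End DerivativesPQ.

Lemma sumC_is_gradC_unique F x g g' (M : nat -> nat -> Cx) k :
  is_gradC F x g -> is_gradC F x g' ->
  sumC 6 (fun l => Cmul (M k l) (g l)) = sumC 6 (fun l => Cmul (M k l) (g' l)).
Proof.
  intros hg hg'; apply sumC_ext; intros l hl; f_equal.
  exact (is_derivC_unique _ _ _ _ (hg l hl) (hg' l hl)).
Qed.

Section Gradients.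
Context {q : nat -> (nat -> R) -> Cx} {V0 V1 V2 : nat -> R} {b : nat -> poly2}
  {x : nat -> R} {eps : R}.
Hypothesis hq : forall j k, (k < 6)%nat ->
  is_derivC (fun t => q j (upd x k t)) (x k) (p2vec V0 V1 V2 (b j) k).
Hypothesis hs : s123 (q 1%nat x) (q 2%nat x) (q 3%nat x) eps <> C0.

Let w1 := sweight (sfun (q 2%nat x) (q 3%nat x) eps) eps.
Let w2 := sweight (sfun (q 1%nat x) (q 3%nat x) eps) eps.
Let w3 := sweight (sfun (q 1%nat x) (q 2%nat x) eps) eps.

Lemma is_gradC_P0v : is_gradC (fun y => P0v (q 1%nat y) (q 2%nat y) (q 3%nat y) eps) x
  (p2vec V0 V1 V2 (p2scale (RC (1 / 4)) (p2pair_comb w1 w2 w3 (b 1%nat) (b 2%nat) (b 3%nat)))).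
Proof.
  intros k hk.
  pose proof (is_derivC_P0v (fun t => q 1%nat (upd x k t)) (fun t => q 2%nat (upd x k t))
    (fun t => q 3%nat (upd x k t)) (x k) eps _ _ _ (hq 1 k hk) (hq 2 k hk) (hq 3 k hk)
    ltac:(cbv beta; rewrite upd_same; exact hs)) as D.
  cbv beta in D; rewrite upd_same in D.
  eapply is_derivC_eq; [exact D | rewrite p2vec_scale, p2vec_pair_comb; reflexivity].
Qed.

Lemma is_gradC_Qv i : (1 <= i <= 3)%nat ->
  is_gradC (fun y => Qv i (q 1%nat y) (q 2%nat y) (q 3%nat y) eps) x
  (p2vec V0 V1 V2 (p2scale (RC (1 / (4 * eps ^ 2)))
     (p2pair_comb (Cmul (sgn i 1) w1) (Cmul (sgn i 2) w2) (Cmul (sgn i 3) w3)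
        (b 1%nat) (b 2%nat) (b 3%nat)))).
Proof.
  intros hi k hk.
  pose proof (is_derivC_Qv (fun t => q 1%nat (upd x k t)) (fun t => q 2%nat (upd x k t))
    (fun t => q 3%nat (upd x k t)) (x k) eps _ _ _ (hq 1 k hk) (hq 2 k hk) (hq 3 k hk)
    ltac:(cbv beta; rewrite upd_same; exact hs) i hi) as D.
  cbv beta in D; rewrite upd_same in D.
  eapply is_derivC_eq; [exact D | rewrite p2vec_scale, p2vec_pair_comb; reflexivity].
Qed.
End Gradients.

(** * The spectral identity *)

Lemma sign_identity eps i m w1 w2 w3 : eps <> 0 -> (1 <= i <= 3)%nat -> (1 <= m <= 3)%nat ->
  Cmul (RC (eps ^ 2)) (Cmul (sgn i m) (Cmul (RC (1 / (4 * eps ^ 2)))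
    (pair_comb (Cmul (sgn i 1) w1) (Cmul (sgn i 2) w2) (Cmul (sgn i 3) w3)
       (sgn 1 m) (sgn 2 m) (sgn 3 m)))) =
  Cmul (RC (1 / 4)) (pair_comb w1 w2 w3 (sgn 1 m) (sgn 2 m) (sgn 3 m)).
Proof.
  intros heps hi hm.
  replace (RC (1 / 4)) with (Cmul (RC (eps ^ 2)) (RC (1 / (4 * eps ^ 2))))
    by (rewrite <- RC_mul; f_equal; field; exact heps).
  destruct i as [|[|[|[|i]]]]; try lia; destruct m as [|[|[|[|m]]]]; try lia;
    cbv [pair_comb sgn Nat.eqb]; rewrite RC_opp1; change (RC 1) with Defs.C1; ring.
Qed.

Section Spectral.
Context {A : nat -> nat -> R} {lam al be ga : nat -> Cx}.
Hypothesis hA : forall i j, (i < 6)%nat -> (j < 6)%nat ->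
  mulR (trR A) Jmat i j = mulR Jmat A i j.
Hypothesis hchar : forall z, charpolyC A z =
  let c := Cmul (Csub z (lam 1%nat)) (Cmul (Csub z (lam 2%nat)) (Csub z (lam 3%nat))) in Cmul c c.
Hypotheses (hd12 : lam 1%nat <> lam 2%nat) (hd13 : lam 1%nat <> lam 3%nat)
  (hd23 : lam 2%nat <> lam 3%nat).
Hypothesis hinterp : forall i j, (1 <= i <= 3)%nat -> (1 <= j <= 3)%nat ->
  Cadd (Cadd (al i) (Cmul (be i) (lam j))) (Cmul (ga i) (Cmul (lam j) (lam j))) =
  (if Nat.eqb i j then RC (-1) else RC 1).

Lemma eigenvalue_root m : (1 <= m <= 3)%nat ->
  Cmul (lam m) (Cmul (lam m) (lam m)) =
  Cadd (Csub (Cmul (RC (char_c1 A)) (Cmul (lam m) (lam m))) (Cmul (RC (char_c2 A)) (lam m)))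
    (RC (char_c3 A)).
Proof.
  intros hm.
  destruct (vieta_of_squared_cubic (lam 1%nat) (lam 2%nat) (lam 3%nat)
    (char_c1 A) (char_c2 A) (char_c3 A))
    as (e1 & e2 & e3).
  { intros r; rewrite <- (det_sub_skewHamiltonian A hA), <- charpolyC_RC; symmetry; apply hchar. }
  rewrite e1, e2, e3; apply root_of_cubic.
  destruct m as [|[|[|[|m]]]]; try lia; auto.
Qed.

Lemma interpolant_eval j m : (1 <= j <= 3)%nat -> (1 <= m <= 3)%nat ->
  p2eval (al j, be j, ga j) (lam m) = sgn j m.
Proof. intros hj hm; unfold sgn; rewrite <- hinterp by auto; simpl; ring. Qed.

Lemma gradient_poly_identity eps w1 w2 w3 i : eps <> 0 -> (1 <= i <= 3)%nat ->
  p2scale (RC (1 / 4))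
    (p2pair_comb w1 w2 w3 (al 1%nat, be 1%nat, ga 1%nat) (al 2%nat, be 2%nat, ga 2%nat)
       (al 3%nat, be 3%nat, ga 3%nat)) =
  p2scale (RC (eps ^ 2))
    (p2mul (RC (char_c1 A)) (RC (char_c2 A)) (RC (char_c3 A)) (al i, be i, ga i)
      (p2scale (RC (1 / (4 * eps ^ 2)))
        (p2pair_comb (Cmul (sgn i 1) w1) (Cmul (sgn i 2) w2) (Cmul (sgn i 3) w3)
           (al 1%nat, be 1%nat, ga 1%nat) (al 2%nat, be 2%nat, ga 2%nat)
           (al 3%nat, be 3%nat, ga 3%nat)))).
Proof.
  intros heps hi; apply (p2_eq_of_eval (lam 1%nat) (lam 2%nat) (lam 3%nat)); auto;
    rewrite !p2eval_scale, p2eval_mul, p2eval_scale, !p2eval_pair_comb, !interpolant_eval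
      by auto using eigenvalue_root;
    symmetry; apply sign_identity; auto.
Qed.
End Spectral.

Theorem mainTheorem17
  (A : nat -> nat -> R) (T : nat -> nat -> nat -> R)
  (lam al be ga : nat -> Cx)
  (hA : forall i j, (i < 6)%nat -> (j < 6)%nat ->
          mulR (trR A) Jmat i j = mulR Jmat A i j)
  (hT : sym3 T)
  (hH : forall x i j, (i < 6)%nat -> (j < 6)%nat ->
          mulR A (hessH0 T x) i j = mulR (hessH0 T x) (trR A) i j)
  (hchar : forall z, charpolyC A z =
     let c := Cmul (Csub z (lam 1%nat)) (Cmul (Csub z (lam 2%nat)) (Csub z (lam 3%nat)))
     in Cmul c c)
  (hd12 : lam 1%nat <> lam 2%nat) (hd13 : lam 1%nat <> lam 3%nat)
  (hd23 : lam 2%nat <> lam 3%nat)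
  (hinterp : forall i j, (1 <= i <= 3)%nat -> (1 <= j <= 3)%nat ->
     Cadd (Cadd (al i) (Cmul (be i) (lam j))) (Cmul (ga i) (Cmul (lam j) (lam j)))
     = (if Nat.eqb i j then RC (-1) else RC 1))
  (hdet : exists x : nat -> R, detR 6 (df0 T x) <> 0) :
  let B := fun i => Bmat A (al i) (be i) (ga i) in
  let q := fun i x => qfun (B i) T x in
  forall (i : nat), (1 <= i <= 3)%nat ->
  forall (eps : R) (x : nat -> R), eps <> 0 ->
    s123 (q 1%nat x) (q 2%nat x) (q 3%nat x) eps <> C0 ->
  (exists gP, is_gradC (fun y => P0v (q 1%nat y) (q 2%nat y) (q 3%nat y) eps) x gP) /\
  (exists gQ, is_gradC (fun y => Qv i (q 1%nat y) (q 2%nat y) (q 3%nat y) eps) x gQ) /\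
  forall gP gQ : nat -> Cx,
    is_gradC (fun y => P0v (q 1%nat y) (q 2%nat y) (q 3%nat y) eps) x gP ->
    is_gradC (fun y => Qv i (q 1%nat y) (q 2%nat y) (q 3%nat y) eps) x gQ ->
    forall k, (k < 6)%nat ->
      gP k = Cmul (RC (eps ^ 2)) (sumC 6 (fun l => Cmul (B i k l) (gQ l))).
Proof.
  intros B q i hi eps x heps hs.
  assert (hq : forall j k, (k < 6)%nat -> is_derivC (fun t => q j (upd x k t)) (x k)
    (p2vec (qform_partial T x idR) (qform_partial T x A) (qform_partial T x (mulR A A))
       (al j, be j, ga j) k)) by (intros j k; exact (is_derivC_qfun A T (al j) (be j) (ga j) x k)).
  pose proof (is_gradC_P0v hq hs) as gradP; pose proof (is_gradC_Qv hq hs i hi) as gradQ.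
  split; [eexists; exact gradP | split; [eexists; exact gradQ |]].
  intros gP gQ hP hQ k hk.
  rewrite (is_derivC_unique _ _ _ _ (hP k hk) (gradP k hk)).
  rewrite (sumC_is_gradC_unique _ _ _ _ _ _ hQ gradQ).
  unfold B; rewrite (sumC_Bmat_p2vec A _ _ _ _ _ _ (qform_partial_cyclic0 A T x hA hT hH)
    (qform_partial_cyclic1 A T x hA hT hH) (qform_partial_cyclic2 A T x hA hT hH)) by exact hk.
  rewrite <- p2vec_scale.
  rewrite (gradient_poly_identity hA hchar hd12 hd13 hd23 hinterp _ _ _ _ i heps hi).
  reflexivity.
Qed.
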